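(* The module $\mathbb W_1^{\otimes m}$ is generated by its degree-zero part $V^{\otimes m}$ as a $U(\mathfrak p)$-module.
   Context: Fix integers $\ell>1$, $n\ge m\ge1$; $\lceil i/n\rceil$ is the block index of $1\le i\le n\ell$. $E_{ij}$ are matrix units of $\mathfrak{gl}(n\ell)$; $\mathfrak p\subset\mathfrak{gl}(n\ell)\otimes\mathbb C[z]$ is the Lie subalgebra spanned by the $E_{ij}\otimes z^k$ ($k\ge0$) with $\lceil i/n\rceil-\lceil j/n\rceil+k\equiv0\pmod\ell$. Let $V=\mathbb C^{n\ell}$ and $\mathbb W_1=V\otimes\mathbb C[z]$ (graded by $z$-degree) with the natural action of $\mathfrak{gl}(n\ell)\otimes\mathbb C[z]$ ($(\xi\otimes z^k)(v\otimes z^r)=\xi v\otimes z^{k+r}$); $\mathfrak p$ acts on $\mathbb W_1^{\otimes m}$ diagonally by restriction. *)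

From HB Require Import structures.
From mathcomp Require Import all_boot all_order all_algebra.
Set Implicit Arguments. Unset Strict Implicit. Unset Printing Implicit Defensive.
Import GRing.Theory.
Local Open Scope ring_scope.

(* Basis of W_1^{(x) m} = (V (x) C[z])^{(x) m}, V = F^N (N = n*l):
   basis tensors (e_{i_1} z^{r_1}) (x) ... (x) (e_{i_m} z^{r_m}) are indexed
   by m-tuples of pairs (i, r), i : 'I_N (0-based), r : nat.
   A vector is a (finitely supported) coefficient function idx N m -> F. *)
Definition idx (N m : nat) : Type := (m.-tuple ('I_N * nat))%type.

Definition tset (T : Type) (m : nat) (t : m.-tuple T) (p : 'I_m) (x : T)
  : m.-tuple T := [tuple if q == p then x else tnth t q | q < m].

(* E_{ij} (x) z^k belongs to p iff  ceil(i/n) - ceil(j/n) + k = 0 mod l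
   (1-based indices).  For 0-based i', j' one has ceil((i'+1)/n) = i'/n + 1,
   so the condition reads  i'/n + k = j'/n  (mod l). *)
Definition in_p (n l N : nat) (i j : 'I_N) (k : nat) : bool :=
  (i %/ n + k == j %/ n %[mod l])%N.

(* diagonal action of E_{ij} (x) z^k on W_1^{(x) m}, on coefficient functions:
   (E_{ij} z^k)(e_{j} z^r) = e_i z^{r+k}, and E_{ij} e_{j'} = 0 for j' <> j. *)
Definition act (F : fieldType) (N m : nat) (i j : 'I_N) (k : nat)
  (f : idx N m -> F) : idx N m -> F :=
  fun t => \sum_(p < m)
    (if ((tnth t p).1 == i) && (k <= (tnth t p).2)%N
     then f (tset t p (j, ((tnth t p).2 - k)%N)) else 0).

Definition degree0 (F : fieldType) (N m : nat) (f : idx N m -> F) : Prop :=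
  forall t : idx N m, (exists p : 'I_m, (tnth t p).2 != 0%N) -> f t = 0.

Definition fin_supp (F : fieldType) (N m : nat) (f : idx N m -> F) : Prop :=
  exists s : seq (idx N m), forall t, t \notin s -> f t = 0.

(* the U(p)-submodule generated by V^{(x) m}: the smallest subspace containing
   V^{(x) m} and stable under the (spanning) elements E_{ij} (x) z^k of p *)
Inductive gen_deg0 (F : fieldType) (n l m : nat) : (idx (n * l) m -> F) -> Prop :=
  | gen_base (f : idx (n * l) m -> F) : degree0 f -> gen_deg0 f
  | gen_add (f g : idx (n * l) m -> F) : gen_deg0 f -> gen_deg0 g ->
      gen_deg0 (fun t => f t + g t)
  | gen_scale (c : F) (f : idx (n * l) m -> F) : gen_deg0 f ->
      gen_deg0 (fun t => c * f t)
  | gen_act (i j : 'I_(n * l)) (k : nat) (f : idx (n * l) m -> F) :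
      in_p n l i j k -> gen_deg0 f -> gen_deg0 (act i j k f).
Arguments gen_deg0 {F} n l m _.

From HB Require Import structures.
From mathcomp Require Import all_boot all_order all_algebra.
From mathcomp Require Import zify.
From Stdlib Require Import FunctionalExtensionality.
Set Implicit Arguments.
Unset Strict Implicit.
Unset Printing Implicit Defensive.
Import GRing.Theory.

(* The basis tensors span, so it suffices to reach each of them, by induction
   on the total z-degree.  Given a basis tensor t whose factor at position p is
   e_i z^k with k > 0, choose an index j in the block (i/n + k) mod l that
   occurs at no other position; this is possible because the other m - 1 < n
   positions cannot exhaust the n indices of a block.  Then E_{ij} z^k lies in
   p, and applied to the tensor s obtained from t by replacing that factor with
   e_j it can only act at position p, so it maps s to t, while s has smaller
   total degree. *)

Lemma tnth_tset (T : Type) (m : nat) (t : m.-tuple T) (p : 'I_m) (x : T) q :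
  tnth (tset t p x) q = if q == p then x else tnth t q.
Proof. by rewrite /tset tnth_mktuple. Qed.

Lemma tset_tnth (T : Type) (m : nat) (t : m.-tuple T) (p : 'I_m) :
  tset t p (tnth t p) = t.
Proof. by apply: eq_from_tnth => q; rewrite tnth_tset; case: eqP => [->|]. Qed.

Lemma tset_tset (T : Type) (m : nat) (t : m.-tuple T) (p : 'I_m) (x y : T) :
  tset (tset t p x) p y = tset t p y.
Proof. by apply: eq_from_tnth => q; rewrite !tnth_tset; case: eqP. Qed.

Definition delta (F : fieldType) (N m : nat) (s : idx N m) : idx N m -> F :=
  fun u => if u == s then 1%R else 0%R.

Lemma act_delta (F : fieldType) (N m : nat) (i j : 'I_N) (k : nat)
    (s : idx N m) (p : 'I_m) :
    tnth s p = (j, 0%N) -> (forall q, q != p -> (tnth s q).1 != j) ->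
  act i j k (delta F s) = delta F (tset s p (i, k)).
Proof.
move=> sp sq; apply: functional_extensionality => u.
rewrite /act (bigD1 p) //= big1 ?addr0 => [|q qp]; last first.
  case: ifP => // _; rewrite /delta; case: eqP => // E.
  by move: (sq q qp); rewrite -E tnth_tset !eqxx.
rewrite /delta; have [->|neq] := eqVneq u (tset s p (i, k)).
  by rewrite tnth_tset !eqxx leqnn subnn tset_tset -sp tset_tnth eqxx.
case: ifP => // /andP [/eqP ui kr]; case: eqP => // E.
exfalso; move/eqP: neq; apply.
have up : tnth u p = (i, k).
  move/(congr1 (fun t => tnth t p)): E; rewrite tnth_tset eqxx sp => -[rk].
  by move: ui kr rk; case: (tnth u p) => a r /= -> kr rk; congr pair; lia.
by rewrite -up -E tset_tset tset_tnth.
Qed.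

Lemma exists_notin_block (n l b : nat) (S : seq 'I_(n * l)) :
  (b < l)%N -> (size S < n)%N -> exists2 j : 'I_(n * l), j %/ n = b & j \notin S.
Proof.
move=> bl Sn.
have [x xb xS] : exists2 x, x \in iota (b * n) n & x \notin map val S.
  apply/hasP; apply: contraTT Sn => /hasPn inS; rewrite -leqNgt.
  have := uniq_leq_size (iota_uniq (b * n) n) (fun y yb => negbNE (inS y yb)).
  by rewrite size_iota size_map.
move: xb; rewrite mem_iota => /andP [bx xn].
have xl : (x < n * l)%N by have := leq_mul bl (leqnn n); rewrite mulSn; lia.
exists (Ordinal xl); last by apply: contra xS => jS; apply/mapP; exists (Ordinal xl).
by rewrite /= -(subnKC bx) divnMDl ?divn_small ?addn0 //; lia.
Qed.

Lemma exists_label_unused_elsewhere (n l m b : nat) (t : idx (n * l) m) (p : 'I_m) :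
  (b < l)%N -> (m <= n)%N ->
  exists2 j : 'I_(n * l), j %/ n = b & forall q, q != p -> (tnth t q).1 != j.
Proof.
move=> bl mn; pose S := [seq (tnth t q).1 | q <- rem p (enum 'I_m)].
have [|j jb jS] := @exists_notin_block n l b S bl.
  rewrite size_map size_rem ?mem_enum // size_enum_ord.
  by move: (ltn_ord p); lia.
exists j => // q qp; apply: contra jS => /eqP <-; apply: map_f.
by rewrite (mem_rem_uniq _ (enum_uniq _)) inE qp mem_enum.
Qed.

Definition zdeg (N m : nat) (t : idx N m) : nat := \sum_(p < m) (tnth t p).2.

Lemma zdeg_tset (N m : nat) (t : idx N m) (p : 'I_m) (x : 'I_N * nat) :
  (zdeg (tset t p x) + (tnth t p).2 = zdeg t + x.2)%N.
Proof.
rewrite /zdeg (bigD1 p) //= [X in (_ = X + _)%N](bigD1 p) //= tnth_tset eqxx.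
rewrite (eq_bigr (fun q => (tnth t q).2)) => [|q /negbTE qp]; last first.
  by rewrite tnth_tset qp.
lia.
Qed.

Lemma gen_deg0_delta (F : fieldType) (l n m : nat) (t : idx (n * l) m) :
  (0 < l)%N -> (m <= n)%N -> gen_deg0 n l m (delta F t).
Proof.
move=> l0 mn; elim: {t}(zdeg t).+1 {-2}t (ltnSn (zdeg t)) => // d IH t td.
have [p kp|deg0] := pickP (fun p : 'I_m => (tnth t p).2 != 0%N); last first.
  apply: gen_base => u [q uq]; rewrite /delta; case: eqP => // ut.
  by move: (deg0 q); rewrite -ut uq.
case tp: (tnth t p) kp => [i k] /= kp.
have [j jb jt] := exists_label_unused_elsewhere t p (ltn_pmod (i %/ n + k) l0) mn.
pose s := tset t p (j, 0%N).
have -> : t = tset s p (i, k) by rewrite tset_tset -tp tset_tnth.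
rewrite -(@act_delta F _ _ i j k s p); first last.
- by move=> q qp; rewrite tnth_tset (negbTE qp) jt.
- by rewrite tnth_tset eqxx.
apply: gen_act; first by rewrite /in_p jb modn_mod.
by apply: IH; have := zdeg_tset t p (j, 0%N); rewrite -/s tp /=; lia.
Qed.

Lemma gen_deg0_fin_supp (F : fieldType) (l n m : nat) (f : idx (n * l) m -> F) :
  (forall t, gen_deg0 n l m (delta F t)) -> fin_supp f -> gen_deg0 n l m f.
Proof.
move=> gen_delta [s]; elim: s f => [|u s IH] f fs.
  by apply: gen_base => t _; apply: fs.
have -> : f = (fun t => f u * delta F u t + (f t - f u * delta F u t))%R.
  by apply: functional_extensionality => t; rewrite addrC subrK.
apply: gen_add; first exact: gen_scale.
apply: IH => t ts; rewrite /delta; case: eqP => [->|tu].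
  by rewrite mulr1 subrr.
by rewrite mulr0 subr0 fs // in_cons negb_or ts andbT; apply/eqP.
Qed.

Theorem proposition2p3 (F : fieldType) (hF : [pchar F]%R =i pred0)
  (l n m : nat) (hl : (1 < l)%N) (hmn : (1 <= m <= n)%N)
  (f : idx (n * l) m -> F) :
  fin_supp f -> gen_deg0 n l m f.
Proof.
case/andP: hmn => _ mn; apply: gen_deg0_fin_supp => t.
by apply: gen_deg0_delta; first exact: ltnW.
Qed.
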